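(* Let $K$ be an oriented framed knot, $D$ an open diagram of $K$ drawn as in the context, $N\ge2$ an integer, and $\mu\in\mathbb{C}$ with $m=e^{2\pi i\mu}$. Let $(b_i)$ be a solution of the segment equations of $D$ with meridian eigenvalue $m$, with $b=1$ on the boundary segment of the closure, all $b_i\ne0$, and no shape parameter in $\{0,1,\infty\}$. Let $\beta\in\mathbb{C}^E$ with $e^{2\pi i\beta_i}=b_i$ for all $i\in E$. Then $W_{D,\mu}$ is finite at every point of $\frac{\beta}{N}+\frac1N\mathbb{Z}^E$, and for every $n\in\mathbb{Z}^E$ and every $i\in E$, $$W_{D,\mu}\!\left(\tfrac{\beta+n}{N}+e_i\right)=W_{D,\mu}\!\left(\tfrac{\beta+n}{N}\right),$$ where $e_i$ is the $i$-th standard basis vector; i.e. $W_{D,\mu}$ restricted to the lattice $\frac{\beta}{N}+\frac1N\mathbb{Z}^E$ is $\mathbb{Z}^E$-periodic.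
   Context: Open diagram, segments, crossing labels, sign and segment equations: $D$ is an oriented blackboard-framed 1-1 tangle diagram whose closure is $K$; segments are edges of the underlying 4-valent graph; the two segments meeting the boundary are boundary segments (joined into one segment in the closure); $E$ is the set of internal segments. At a crossing with both strands oriented left to right: incoming top-left $1$, incoming bottom-left $2$, outgoing bottom-right $1'$ (continuation of $1$), outgoing top-right $2'$ (continuation of $2$); sign $\epsilon=+1$ if $1\to1'$ is over, $-1$ if $2\to2'$ is over. Shape parameters: $z_{\mathrm N}=(b_{2'}/b_1)^\epsilon$, $z_{\mathrm S}=(b_2/b_{1'})^\epsilon$, $z_{\mathrm W}=(b_2/(mb_1))^\epsilon$, $z_{\mathrm E}=(mb_{2'}/b_{1'})^\epsilon$. Segment values $a_1=m^\epsilon\frac{1-z_{\mathrm W}}{1-z_{\mathrm N}}$, $a_{2'}=m^{-\epsilon}\frac{1-z_{\mathrm E}}{1-z_{\mathrm N}}$, $a_2=m^{-\epsilon}\frac{1-z_{\mathrm S}}{1-z_{\mathrm W}}$, $a_{1'}=m^{\epsilon}\frac{1-z_{\mathrm S}}{1-z_{\mathrm E}}$; the segment equations require the two values assigned to each segment of the closure (from its two end crossings) to agree. Quantum dilogarithm: for $\mathsf b>0$ let $c_{\mathsf b}=\frac i2(\mathsf b+\mathsf b^{-1})$ and $\Phi_{\mathsf b}(z)=\exp\int_{\mathbb{R}+i0}\frac{e^{-2izw}}{4\sinh(w\mathsf b)\sinh(w/\mathsf b)}\frac{dw}{w}$ for $|\operatorname{Im}z|<|\operatorname{Im}c_{\mathsf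 b}|$, extended to a meromorphic function on $\mathbb{C}$ (Faddeev's noncompact quantum dilogarithm). Set $E_N(t)=\Phi_{\sqrt N}(i\sqrt N\,t-c_{\sqrt N}+i/\sqrt N)$; it satisfies $E_N(t)=E_N(t-1/N)/(1-e^{2\pi i t})$, and its zeros and poles lie in $\frac1N\mathbb{Z}$. Crossing weights: for a positive crossing $\Lambda^+(t_1,t_2,t_{1'},t_{2'})=\dfrac{E_N(t_{2'}-t_1)\,E_N(t_2-t_{1'})}{E_N(t_2-t_1-\mu/N+1-1/N)\,E_N(t_{2'}-t_{1'}+\mu/N)}\,e^{2\pi i(1-N)(t_2-t_1-\mu/N)+2\pi i\mu(t_2+t_{1'}-t_1-t_{2'})}$; for a negative crossing $\Lambda^-(t_1,t_2,t_{1'},t_{2'})=\dfrac{E_N(t_1-t_2+\mu/N)\,E_N(t_{1'}-t_{2'}-\mu/N+1-1/N)}{E_N(t_1-t_{2'}+1-1/N)\,E_N(t_{1'}-t_2+1-1/N)}\,e^{-2\pi i(1-N)(t_2-t_1-\mu/N)-2\pi i\mu(t_2+t_{1'}-t_1-t_{2'})}$. Weight of the diagram: draw $D$ so that at every crossing both strands point left to right, with finitely many turning points (points of vertical tangent, away from crossings). A turning point that is a leftmost point traversed clockwise or a rightmost point traversed counterclockwise has shift $0$; a leftmost point traversed counterclockwise has shift $1/N-1$; a rightmost point traversed clockwise has shift $1-1/N$. Assign a variable $t_i\in\mathbb{C}$ to each $i\in E$ and $0$ to each boundary segment; this is the value at the segment's initial end, and the value at its final end is this plus the sum of the shifts of the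 turning points along the segment. At each crossing insert the values at the ends meeting it into $\Lambda^{\epsilon}$ (incoming segments $1,2$ and outgoing $1',2'$). Define the meromorphic function $W_{D,\mu}(t)=\prod_{\text{crossings}}\Lambda^{\epsilon}(\dots)$ on $\mathbb{C}^E$; it equals $\exp(N\,\mathcal S_{D,\mu}(t))$ for the action $\mathcal S_{D,\mu}=\frac1N\sum_{\text{crossings}}\log\Lambda^\epsilon$. *)

From Stdlib Require Import Reals List Arith ZArith.
From Coquelicot Require Import Coquelicot.
Import ListNotations.
Open Scope R_scope.

Definition Cexp (z : C) : C :=
  (exp (fst z) * cos (snd z), exp (fst z) * sin (snd z)).

Definition Csinh (w : C) : C := ((Cexp w - Cexp (- w)) / RtoC 2)%C.

Definition Cnz (z : C) : bool :=
  if Req_EM_T (fst z) 0 then (if Req_EM_T (snd z) 0 then false else true)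
  else true.

Definition Cprod (l : list C) : C := fold_right Cmult (RtoC 1) l.

Definition c_b (b : R) : C := (Ci * RtoC ((b + / b) / 2))%C.

(* The contour R + i0 passing above the pole at 0: we integrate along the
   horizontal line Im w = delta_b, with 0 < delta_b < pi*min(b,1/b), so
   that no pole of the integrand lies between R and that line. *)
Definition delta_b (b : R) : R := PI / (2 * (b + / b)).

Definition phi_integrand (b : R) (z : C) (x : R) : C :=
  let w : C := (x, delta_b b) in
  (Cexp (RtoC (-2) * Ci * z * w) /
     (RtoC 4 * Csinh (w * RtoC b) * Csinh (w / RtoC b) * w))%C.

(* Faddeev's quantum dilogarithm on the strip |Im z| < |Im c_b| *)
Definition Phi_strip (b : R) (z : C) : C :=
  Cexp (RInt_gen (V := C_R_CompleteNormedModule) (phi_integrand b z)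
          (Rbar_locally m_infty) (Rbar_locally p_infty)).

(* Meromorphic extension of Phi_b to C, with value None at poles.
   Write z = w + i k b with k an integer and Im w in [-b/2, b/2) (inside the
   strip).  The extension satisfies
     Phi_b(u - i b) = (1 + e^{2 pi b (u - i b/2)}) Phi_b(u),
   which gives the explicit continuation below.  Since Phi_b is finite and
   nonzero on the strip, the extension is the unique one. *)
Definition Phi_fac (b : R) (w : C) (j : R) : C :=
  (RtoC 1 + Cexp (RtoC (2 * PI * b) * (w + Ci * RtoC ((j - / 2) * b))))%C.

Definition Phi (b : R) (z : C) : option C :=
  let k : Z := Int_part ((snd z + b / 2) / b) in
  let w : C := (z - Ci * RtoC (IZR k * b))%C in
  if (0 <=? k)%Z then
    let d := Cprod (map (fun j => Phi_fac b w (INR j)) (seq 1 (Z.to_nat k))) in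
    if Cnz d then Some (Phi_strip b w / d)%C else None
  else
    Some (Cprod (map (fun j => Phi_fac b w (- INR j + 1))
                     (seq 1 (Z.to_nat (- k)))) * Phi_strip b w)%C.

Definition E_N (N : nat) (t : C) : option C :=
  let b := sqrt (INR N) in
  Phi b (Ci * RtoC b * t - c_b b + Ci / RtoC b)%C.

(* Segments: the incoming boundary segment, the outgoing boundary segment
   (these two are joined into one segment of the closure), and the
   internal segments SInt i, i < nE (the set E). *)
Inductive seg := SIn | SOut | SInt (i : nat).

Definition seg_eqb (s s' : seg) : bool :=
  match s, s' with
  | SIn, SIn => true
  | SOut, SOut => true
  | SInt i, SInt j => Nat.eqb i j
  | _, _ => false
  end.

(* Turning points (points of vertical tangent) *)
Inductive turn :=
  | LeftCW
  | RightCCW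
  | LeftCCW
  | RightCW.

Definition turn_shift (N : nat) (x : turn) : R :=
  match x with
  | LeftCW | RightCCW => 0
  | LeftCCW => / INR N - 1
  | RightCW => 1 - / INR N
  end.

(* A crossing with both strands oriented left to right:
   in1 = incoming top-left (1), in2 = incoming bottom-left (2),
   out1 = outgoing bottom-right (1', continuation of 1),
   out2 = outgoing top-right (2', continuation of 2);
   positive = true iff epsilon = +1 (1 -> 1' is the over strand). *)
Record crossing := mkCrossing {
  positive : bool;
  in1 : seg; in2 : seg; out1 : seg; out2 : seg }.

Record diagram := mkDiagram {
  nE : nat;                      (* E = {0, ..., nE - 1} *)
  crossings : list crossing;
  turns : seg -> list turn
}.

Definition valid_seg (D : diagram) (s : seg) : Prop :=
  match s with SInt i => (i < nE D)%nat | _ => True end.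

Definition count_in (D : diagram) (s : seg) : nat :=
  fold_right (fun c acc =>
    ((if seg_eqb (in1 c) s then 1 else 0) +
     (if seg_eqb (in2 c) s then 1 else 0) + acc)%nat) 0%nat (crossings D).

Definition count_out (D : diagram) (s : seg) : nat :=
  fold_right (fun c acc =>
    ((if seg_eqb (out1 c) s then 1 else 0) +
     (if seg_eqb (out2 c) s then 1 else 0) + acc)%nat) 0%nat (crossings D).

Fixpoint next_in (l : list crossing) (s : seg) : option seg :=
  match l with
  | [] => None
  | c :: l' =>
      if seg_eqb (in1 c) s then Some (out1 c)
      else if seg_eqb (in2 c) s then Some (out2 c)
      else next_in l' s
  end.

Fixpoint walk (D : diagram) (k : nat) (s : seg) : option seg :=
  match k with
  | O => Some s
  | S k' => match next_in (crossings D) s with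
            | Some s' => walk D k' s'
            | None => None
            end
  end.

(* Well-formedness: each segment has exactly one initial and one final end
   at crossings (boundary segments: one end each), and the strand starting
   at the boundary runs through all segments and ends at the boundary, so
   that the closure is a knot (one component). *)
Definition wf_diagram (D : diagram) : Prop :=
  (forall c, In c (crossings D) ->
     valid_seg D (in1 c) /\ valid_seg D (in2 c) /\
     valid_seg D (out1 c) /\ valid_seg D (out2 c)) /\
  count_in D SIn = 1%nat /\ count_out D SIn = 0%nat /\
  count_in D SOut = 0%nat /\ count_out D SOut = 1%nat /\
  (forall i, (i < nE D)%nat ->
     count_in D (SInt i) = 1%nat /\ count_out D (SInt i) = 1%nat) /\
  walk D (S (nE D)) SIn = Some SOut.

Definition bval (b : nat -> C) (s : seg) : C :=
  match s with SInt i => b i | _ => RtoC 1 end.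

Definition epow (pos : bool) (x : C) : C := if pos then x else (/ x)%C.

Section Shapes.
Variables (b : nat -> C) (m : C) (c : crossing).
Let e := positive c.
Let b1 := bval b (in1 c).
Let b2 := bval b (in2 c).
Let b1' := bval b (out1 c).
Let b2' := bval b (out2 c).
Definition zN : C := epow e (b2' / b1)%C.
Definition zS : C := epow e (b2 / b1')%C.
Definition zW : C := epow e (b2 / (m * b1))%C.
Definition zE : C := epow e (m * b2' / b1')%C.
Definition a_in1 : C := (epow e m * (RtoC 1 - zW) / (RtoC 1 - zN))%C.
Definition a_out2 : C := (epow (negb e) m * (RtoC 1 - zE) / (RtoC 1 - zN))%C.
Definition a_in2 : C := (epow (negb e) m * (RtoC 1 - zS) / (RtoC 1 - zW))%C.
Definition a_out1 : C := (epow e m * (RtoC 1 - zS) / (RtoC 1 - zE))%C.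
End Shapes.

(* an incoming end of segment s and an outgoing end of segment s' belong to
   the same segment of the closure *)
Definition same_closure_seg (s_in s_out : seg) : Prop :=
  match s_in, s_out with
  | SInt i, SInt j => i = j
  | SIn, SOut => True
  | _, _ => False
  end.

Definition segment_equations (D : diagram) (b : nat -> C) (m : C) : Prop :=
  forall c c', In c (crossings D) -> In c' (crossings D) ->
    (same_closure_seg (in1 c) (out1 c') -> a_in1 b m c = a_out1 b m c') /\
    (same_closure_seg (in1 c) (out2 c') -> a_in1 b m c = a_out2 b m c') /\
    (same_closure_seg (in2 c) (out1 c') -> a_in2 b m c = a_out1 b m c') /\
    (same_closure_seg (in2 c) (out2 c') -> a_in2 b m c = a_out2 b m c').

(* no shape parameter in {0, 1, infinity} (they are finite since all b's
   are nonzero and m <> 0) *)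
Definition shapes_nondegenerate (D : diagram) (b : nat -> C) (m : C) : Prop :=
  forall c, In c (crossings D) ->
    forall z, In z [zN b c; zS b c; zW b m c; zE b m c] ->
      z <> RtoC 0 /\ z <> RtoC 1.

Definition seg_shift (D : diagram) (N : nat) (s : seg) : R :=
  fold_right Rplus 0 (map (turn_shift N) (turns D s)).

Definition tinit (t : nat -> C) (s : seg) : C :=
  match s with SInt i => t i | _ => RtoC 0 end.
Definition tfin (D : diagram) (N : nat) (t : nat -> C) (s : seg) : C :=
  (tinit t s + RtoC (seg_shift D N s))%C.

Definition oratio (x1 x2 y1 y2 : option C) (ex : C) : option C :=
  match x1, x2, y1, y2 with
  | Some a1, Some a2, Some d1, Some d2 =>
      if Cnz (d1 * d2)%C then Some (a1 * a2 / (d1 * d2) * Cexp ex)%C else None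
  | _, _, _, _ => None
  end.

Definition twopii : C := (RtoC (2 * PI) * Ci)%C.

Definition Lambda_plus (N : nat) (mu t1 t2 t1' t2' : C) : option C :=
  let n := RtoC (INR N) in
  let one := RtoC 1 in
  oratio (E_N N (t2' - t1)%C) (E_N N (t2 - t1')%C)
         (E_N N (t2 - t1 - mu / n + one - one / n)%C)
         (E_N N (t2' - t1' + mu / n)%C)
         (twopii * (one - n) * (t2 - t1 - mu / n)
          + twopii * mu * (t2 + t1' - t1 - t2'))%C.

Definition Lambda_minus (N : nat) (mu t1 t2 t1' t2' : C) : option C :=
  let n := RtoC (INR N) in
  let one := RtoC 1 in
  oratio (E_N N (t1 - t2 + mu / n)%C) (E_N N (t1' - t2' - mu / n + one - one / n)%C)
         (E_N N (t1 - t2' + one - one / n)%C)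
         (E_N N (t1' - t2 + one - one / n)%C)
         (- (twopii * (one - n) * (t2 - t1 - mu / n))
          - twopii * mu * (t2 + t1' - t1 - t2'))%C.

Definition Lambda (D : diagram) (N : nat) (mu : C) (t : nat -> C)
    (c : crossing) : option C :=
  (if positive c then Lambda_plus else Lambda_minus) N mu
    (tfin D N t (in1 c)) (tfin D N t (in2 c))
    (tinit t (out1 c)) (tinit t (out2 c)).

Definition omul (x y : option C) : option C :=
  match x, y with Some a, Some b => Some (a * b)%C | _, _ => None end.

(* W_{D,mu}(t); None means W is not finite at t *)
Definition W (D : diagram) (N : nat) (mu : C) (t : nat -> C) : option C :=
  fold_right (fun c acc => omul (Lambda D N mu t c) acc) (Some (RtoC 1))
    (crossings D).

From Pilot Require Import Defs.
From Stdlib Require Import Reals List ZArith Lia Lra.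
From Coquelicot Require Import Coquelicot.
Import ListNotations.
Open Scope R_scope.

(* At a point t of the lattice (beta + Z^E)/N, q(u) = e^{2 pi i N u} takes the value
   b_j at both ends of every segment j, because turning points shift t by elements of
   Z/N.  So q of each argument of each E_N in W is a shape parameter, which is never 1;
   there E_N is finite and nonzero.  Moving t_i by 1 moves these arguments by integers,
   and E_N(u + 1) = E_N(u) / (1 - q(u)); hence a crossing weight is multiplied by 1/a
   for an end of segment i entering the crossing and by a for an end leaving it, a
   being the segment value of that end.  Segment i has one end of each kind, and the
   segment equations make their two values equal. *)

Lemma C_ext (a b : C) : fst a = fst b -> snd a = snd b -> a = b.
Proof. destruct a, b; simpl; intros; subst; reflexivity. Qed.

Lemma Cinv_neq_0 (x : C) : x <> 0%C -> (/ x)%C <> 0%C.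
Proof. intros Hx E. apply C1_nz. rewrite <- (Cinv_r x Hx), E. ring. Qed.

Lemma Cminus_1_neq_0 (q : C) : q <> 1%C -> (1 - q)%C <> 0%C.
Proof. intro Hq. apply Cminus_eq_contra. congruence. Qed.

Lemma Cnz_true (d : C) : d <> 0%C -> Cnz d = true.
Proof.
  destruct d as [x y]; unfold Cnz; simpl; intro H.
  destruct (Req_EM_T x 0) as [->|], (Req_EM_T y 0) as [->|]; try reflexivity.
  exfalso; apply H; reflexivity.
Qed.

Lemma Cprod_map_mult {A : Type} (f g : A -> C) (l : list A) :
  Cprod (map (fun a => f a * g a)%C l) = (Cprod (map f l) * Cprod (map g l))%C.
Proof. induction l as [|a l IH]; simpl; [ring | rewrite IH; ring]. Qed.

Lemma Cprod_map_const {A : Type} (f : A -> C) (x : C) (l : list A) :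
  (forall a, f a = x) -> Cprod (map f l) = (x ^ length l)%C.
Proof. intro Hf; induction l as [|a l IH]; simpl; [|rewrite Hf, IH]; reflexivity. Qed.

Lemma Cexp_add (a b : C) : Cexp (a + b) = (Cexp a * Cexp b)%C.
Proof.
  destruct a as [x y], b as [u v]; unfold Cexp; apply C_ext; simpl;
  rewrite exp_plus, ?cos_plus, ?sin_plus; ring.
Qed.

Lemma Cexp_0 : Cexp 0 = 1%C.
Proof. unfold Cexp; apply C_ext; simpl; rewrite exp_0, ?cos_0, ?sin_0; ring. Qed.

Lemma Cexp_neq_0 (a : C) : Cexp a <> 0%C.
Proof.
  intro E. apply C1_nz. rewrite <- Cexp_0, <- (Cplus_opp_r a), Cexp_add, E. ring.
Qed.

Lemma Cexp_opp (a : C) : Cexp (- a) = (/ Cexp a)%C.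
Proof.
  assert (H := Cexp_add a (- a)). rewrite Cplus_opp_r, Cexp_0 in H.
  replace (Cexp (- a)) with (/ Cexp a * (Cexp a * Cexp (- a)))%C
    by (field; apply Cexp_neq_0).
  rewrite <- H. ring.
Qed.

Lemma Cexp_sub (a b : C) : Cexp (a - b) = (Cexp a / Cexp b)%C.
Proof. unfold Cminus, Cdiv. rewrite Cexp_add, Cexp_opp. reflexivity. Qed.

Lemma Cexp_twopii_int (k : Z) : Cexp (twopii * IZR k) = 1%C.
Proof.
  assert (H1 : Cexp twopii = 1%C).
  { replace twopii with ((0, 2 * PI) : C) by (unfold twopii; apply C_ext; simpl; ring).
    unfold Cexp; simpl. rewrite exp_0, cos_2PI, sin_2PI. apply C_ext; simpl; ring. }
  induction k as [|k IH|k IH] using Z.peano_ind.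
  - rewrite Cmult_0_r. apply Cexp_0.
  - rewrite succ_IZR, RtoC_plus, Cmult_plus_distr_l, Cexp_add, IH, Cmult_1_r, Cmult_1_l. exact H1.
  - rewrite <- Z.sub_1_r, minus_IZR, RtoC_minus.
    replace (twopii * (IZR k - 1))%C with (twopii * IZR k + - twopii)%C by ring.
    rewrite Cexp_add, Cexp_opp, IH, H1. field.
Qed.

Definition Phi_index (b : R) (z : C) : Z := Int_part ((snd z + b / 2) / b).

Definition Phi_base (b : R) (z : C) : C :=
  (z - Ci * RtoC (IZR (Phi_index b z) * b))%C.

Definition Phi_step (N : nat) (b : R) (w : C) : C :=
  (1 + Cexp (RtoC (2 * PI * b) * w - RtoC (PI * INR N) * Ci))%C.

Section Phi_continuation.

Variables (N : nat) (b : R).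
Hypotheses (Hb : 0 < b) (Hbb : b * b = INR N).

Lemma Phi_fac_int (w : C) (j : Z) : Phi_fac b w (IZR j) = Phi_step N b w.
Proof.
  unfold Phi_fac, Phi_step. f_equal.
  replace (RtoC (2 * PI * b) * (w + Ci * RtoC ((IZR j - / 2) * b)))%C with
    ((RtoC (2 * PI * b) * w - RtoC (PI * INR N) * Ci)
     + twopii * RtoC (IZR (j * Z.of_nat N)))%C.
  - rewrite Cexp_add, Cexp_twopii_int. ring.
  - rewrite mult_IZR, <- INR_IZR_INZ, <- Hbb. unfold twopii. apply C_ext; simpl; field.
Qed.

Lemma Phi_eq_step_pow (z : C) :
  let k := Phi_index b z in
  let F := Phi_step N b (Phi_base b z) in
  Phi b z =
  if (0 <=? k)%Z then
    if Cnz (F ^ Z.to_nat k) then Some (Phi_strip b (Phi_base b z) / F ^ Z.to_nat k)%C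
    else None
  else Some (F ^ Z.to_nat (- k) * Phi_strip b (Phi_base b z))%C.
Proof.
  unfold Phi. fold (Phi_index b z). fold (Phi_base b z). cbv zeta.
  rewrite !Cprod_map_const with (x := Phi_step N b (Phi_base b z)), !length_seq; auto.
  - intro j. replace (- INR j + 1) with (IZR (- Z.of_nat j + 1)).
    + apply Phi_fac_int.
    + rewrite plus_IZR, opp_IZR, <- INR_IZR_INZ. reflexivity.
  - intro j. rewrite INR_IZR_INZ. apply Phi_fac_int.
Qed.

Lemma Phi_index_shift (z : C) : Phi_index b (z + Ci * RtoC b)%C = (Phi_index b z + 1)%Z.
Proof.
  unfold Phi_index.
  replace ((snd (z + Ci * RtoC b)%C + b / 2) / b) with ((snd z + b / 2) / b + 1)
    by (simpl; field; lra).
  symmetry; apply Int_part_spec. rewrite plus_IZR.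
  destruct (base_Int_part ((snd z + b / 2) / b)). lra.
Qed.

Lemma Phi_base_shift (z : C) : Phi_base b (z + Ci * RtoC b)%C = Phi_base b z.
Proof.
  unfold Phi_base. rewrite Phi_index_shift, plus_IZR. apply C_ext; simpl; ring.
Qed.

Lemma Phi_shift (z : C) : Phi_step N b (Phi_base b z) <> 0%C ->
  Phi b (z + Ci * RtoC b)%C =
  option_map (fun v => v / Phi_step N b (Phi_base b z))%C (Phi b z).
Proof.
  intro HF. rewrite !Phi_eq_step_pow. cbv zeta.
  rewrite Phi_index_shift, Phi_base_shift.
  set (F := Phi_step N b (Phi_base b z)) in *.
  destruct (Z_lt_le_dec (Phi_index b z) 0) as [Hk|Hk].
  - destruct (Z.eq_dec (Phi_index b z) (-1)) as [E|E].
    + rewrite E. simpl. rewrite Cnz_true by apply C1_nz. simpl. f_equal. field. auto.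
    + replace (0 <=? Phi_index b z + 1)%Z with false by (symmetry; apply Z.leb_gt; lia).
      replace (0 <=? Phi_index b z)%Z with false by (symmetry; apply Z.leb_gt; lia).
      replace (Z.to_nat (- Phi_index b z)) with (S (Z.to_nat (- (Phi_index b z + 1))))
        by lia.
      simpl. f_equal. field. auto.
  - replace (0 <=? Phi_index b z + 1)%Z with true by (symmetry; apply Z.leb_le; lia).
    replace (0 <=? Phi_index b z)%Z with true by (symmetry; apply Z.leb_le; lia).
    replace (Z.to_nat (Phi_index b z + 1)) with (S (Z.to_nat (Phi_index b z))) by lia.
    pose proof (Cpow_nz F (Z.to_nat (Phi_index b z)) HF) as HFk.
    rewrite Cpow_S, !Cnz_true by (auto using Cmult_neq_0).
    simpl. f_equal. field. auto.
Qed.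

Lemma Phi_finite (z : C) : Phi_step N b (Phi_base b z) <> 0%C ->
  exists v : C, v <> 0%C /\ Phi b z = Some v.
Proof.
  intro HF. rewrite Phi_eq_step_pow. cbv zeta.
  pose proof (Cexp_neq_0 _ : Phi_strip b (Phi_base b z) <> 0%C) as HS.
  destruct (0 <=? _)%Z.
  - rewrite Cnz_true by (apply Cpow_nz; auto).
    eexists; split; [|reflexivity].
    apply Cmult_neq_0; auto. apply Cinv_neq_0, Cpow_nz; auto.
  - eexists; split; [|reflexivity]. apply Cmult_neq_0; auto. apply Cpow_nz; auto.
Qed.

End Phi_continuation.

Definition qexp (N : nat) (t : C) : C := Cexp (twopii * RtoC (INR N) * t).

Definition E_N_arg (N : nat) (t : C) : C :=
  (Ci * RtoC (sqrt (INR N)) * t - c_b (sqrt (INR N)) + Ci / RtoC (sqrt (INR N)))%C.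

Lemma E_N_Phi (N : nat) (t : C) : E_N N t = Phi (sqrt (INR N)) (E_N_arg N t).
Proof. reflexivity. Qed.

Definition indic (r : bool) : C := RtoC (if r then 1 else 0).

Definition jump_factor (x : C) (r s : bool) : C :=
  ((if r then / x else 1) * (if s then x else 1))%C.

Lemma jump_factor_neq_0 (x : C) (r s : bool) : x <> 0%C -> jump_factor x r s <> 0%C.
Proof.
  intro Hx. unfold jump_factor.
  apply Cmult_neq_0; destruct r, s; auto using Cinv_neq_0, C1_nz.
Qed.

Section E_N_translation.

Variable N : nat.
Hypothesis HN : (1 <= N)%nat.

Let sqrtN_pos : 0 < sqrt (INR N).
Proof. apply sqrt_lt_R0, lt_0_INR. lia. Qed.

Let sqrtN_sq : sqrt (INR N) * sqrt (INR N) = INR N.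
Proof. apply sqrt_sqrt, pos_INR. Qed.

Lemma qexp_succ (t : C) : qexp N (t + 1) = qexp N t.
Proof.
  unfold qexp.
  replace (twopii * RtoC (INR N) * (t + 1))%C with
    (twopii * RtoC (INR N) * t + twopii * RtoC (IZR (Z.of_nat N)))%C
    by (rewrite <- INR_IZR_INZ; ring).
  rewrite Cexp_add, Cexp_twopii_int. ring.
Qed.

(* The shift by 2 pi b c_b = pi i (N + 1) is what turns 1 + e^(...) into 1 - q(t). *)
Lemma Phi_step_E_N_arg (t : C) :
  Phi_step N (sqrt (INR N)) (Phi_base (sqrt (INR N)) (E_N_arg N t)) = (1 - qexp N t)%C.
Proof.
  pose proof sqrtN_pos as Hb. pose proof sqrtN_sq as Hbb.
  unfold Phi_step, qexp, Phi_base.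
  set (k := Phi_index _ (E_N_arg N t)). unfold E_N_arg.
  set (b := sqrt (INR N)) in *.
  replace (RtoC (2 * PI * b) * (_ - Ci * RtoC (IZR k * b))
           - RtoC (PI * INR N) * Ci)%C
    with ((twopii * RtoC (INR N) * t + RtoC PI * Ci)
          + twopii * RtoC (IZR (- (k * Z.of_nat N) - Z.of_nat N)))%C.
  - rewrite !Cexp_add, Cexp_twopii_int.
    replace (Cexp (RtoC PI * Ci)) with (- RtoC 1)%C; [ring|].
    replace (RtoC PI * Ci)%C with ((0, PI) : C) by (apply C_ext; simpl; ring).
    unfold Cexp; simpl. rewrite exp_0, cos_PI, sin_PI. apply C_ext; simpl; ring.
  - rewrite minus_IZR, opp_IZR, mult_IZR, <- INR_IZR_INZ, <- Hbb.
    unfold c_b, twopii. apply C_ext; simpl; field; lra.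
Qed.

Lemma E_N_succ (t : C) : qexp N t <> 1%C ->
  E_N N (t + 1)%C = option_map (fun v => v / (1 - qexp N t))%C (E_N N t).
Proof.
  intro Hq. rewrite !E_N_Phi.
  replace (E_N_arg N (t + 1)) with (E_N_arg N t + Ci * RtoC (sqrt (INR N)))%C
    by (unfold E_N_arg; ring).
  rewrite (Phi_shift N) by (auto; rewrite Phi_step_E_N_arg; apply Cminus_1_neq_0; auto).
  rewrite Phi_step_E_N_arg. reflexivity.
Qed.

Lemma E_N_finite (t : C) : qexp N t <> 1%C ->
  exists v : C, v <> 0%C /\ E_N N t = Some v.
Proof.
  intro Hq. rewrite E_N_Phi. apply (Phi_finite N); auto.
  rewrite Phi_step_E_N_arg. apply Cminus_1_neq_0; auto.
Qed.

Lemma E_N_jump (t : C) (r s : bool) : qexp N t <> 1%C ->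
  exists v : C, v <> 0%C /\ E_N N t = Some v /\
    E_N N (t + (indic r - indic s))%C = Some (v * jump_factor (1 - qexp N t) r s)%C.
Proof.
  intro Hq. pose proof (Cminus_1_neq_0 _ Hq) as HF.
  destruct (E_N_finite t Hq) as [v [Hv Ev]].
  exists v; repeat split; auto.
  destruct r, s; unfold indic, jump_factor.
  - replace (t + (RtoC 1 - RtoC 1))%C with t by ring. rewrite Ev. f_equal. field. auto.
  - replace (t + (RtoC 1 - RtoC 0))%C with (t + 1)%C by ring.
    rewrite E_N_succ, Ev by auto. simpl. f_equal. field. auto.
  - set (t' := (t + (RtoC 0 - RtoC 1))%C).
    assert (Ht : t = (t' + 1)%C) by (unfold t'; ring).
    assert (Hq' : qexp N t' = qexp N t) by (rewrite Ht, qexp_succ; reflexivity).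
    rewrite Ht, E_N_succ in Ev by congruence.
    destruct (E_N N t') as [w|]; simpl in Ev; [|discriminate].
    injection Ev as Ev. rewrite Hq' in Ev. f_equal. rewrite <- Ev. field. auto.
  - replace (t + (RtoC 0 - RtoC 0))%C with t by ring. rewrite Ev. f_equal. ring.
Qed.

End E_N_translation.

Definition lattice_point (N : nat) (beta : nat -> C) (n : nat -> Z) (j : nat) : C :=
  ((beta j + RtoC (IZR (n j))) / RtoC (INR N))%C.

Definition shift_at (i : nat) (t : nat -> C) (j : nat) : C :=
  if Nat.eqb j i then (t j + RtoC 1)%C else t j.

Section Lattice.

Variable N : nat.
Hypothesis HN : (1 <= N)%nat.

Let INR_N_neq_0 : INR N <> 0.
Proof. apply not_0_INR. lia. Qed.

Lemma qexp_add (x y : C) : qexp N (x + y) = (qexp N x * qexp N y)%C.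
Proof. unfold qexp. rewrite <- Cexp_add. f_equal. ring. Qed.

Lemma qexp_sub (x y : C) : qexp N (x - y) = (qexp N x / qexp N y)%C.
Proof. unfold qexp, Cdiv. rewrite <- Cexp_opp, <- Cexp_add. f_equal. ring. Qed.

Lemma qexp_div_N (x : C) : qexp N (x / RtoC (INR N)) = Cexp (twopii * x).
Proof.
  unfold qexp. f_equal. field. intro E. apply INR_N_neq_0. injection E. auto.
Qed.

Lemma qexp_0 : qexp N 0 = 1%C.
Proof. unfold qexp. rewrite Cmult_0_r. apply Cexp_0. Qed.

Lemma qexp_1 : qexp N 1 = 1%C.
Proof.
  transitivity (qexp N (0 + 1)); [f_equal; ring|].
  rewrite qexp_succ. apply qexp_0.
Qed.

Lemma qexp_inv_N : qexp N (RtoC 1 / RtoC (INR N)) = 1%C.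
Proof.
  rewrite qexp_div_N. apply (Cexp_twopii_int 1).
Qed.

Lemma qexp_turn_shift (x : turn) : qexp N (RtoC (turn_shift N x)) = 1%C.
Proof.
  destruct x; simpl; try apply qexp_0;
    rewrite RtoC_minus, RtoC_inv by auto;
    replace (/ RtoC (INR N))%C with (RtoC 1 / RtoC (INR N))%C by (unfold Cdiv; ring);
    rewrite qexp_sub, qexp_inv_N, qexp_1; field; apply C1_nz.
Qed.

Lemma qexp_seg_shift (D : diagram) (s : seg) : qexp N (RtoC (seg_shift D N s)) = 1%C.
Proof.
  unfold seg_shift. induction (turns D s) as [|x l IH]; simpl.
  - apply qexp_0.
  - rewrite RtoC_plus, qexp_add, IH, qexp_turn_shift. ring.
Qed.

Section Lattice_values.

Variables (D : diagram) (b beta : nat -> C) (n : nat -> Z).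
Hypothesis Hbeta : forall i, (i < nE D)%nat -> Cexp (twopii * beta i)%C = b i.

Lemma qexp_tinit (s : seg) : valid_seg D s ->
  qexp N (tinit (lattice_point N beta n) s) = bval b s.
Proof.
  destruct s as [| |i]; simpl; intro Hs; try apply qexp_0.
  unfold lattice_point. rewrite qexp_div_N, Cmult_plus_distr_l, Cexp_add,
    Cexp_twopii_int, Hbeta by auto.
  ring.
Qed.

Lemma qexp_tfin (s : seg) : valid_seg D s ->
  qexp N (tfin D N (lattice_point N beta n) s) = bval b s.
Proof.
  intro Hs. unfold tfin. rewrite qexp_add, qexp_tinit, qexp_seg_shift by auto. ring.
Qed.

End Lattice_values.

End Lattice.

Lemma tinit_shift_at (t : nat -> C) (i : nat) (s : seg) :
  tinit (shift_at i t) s = (tinit t s + indic (seg_eqb s (SInt i)))%C.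
Proof.
  unfold shift_at, indic. destruct s as [| |j]; simpl; try ring.
  destruct (Nat.eqb j i); ring.
Qed.

Lemma tfin_shift_at (D : diagram) (N : nat) (t : nat -> C) (i : nat) (s : seg) :
  tfin D N (shift_at i t) s = (tfin D N t s + indic (seg_eqb s (SInt i)))%C.
Proof. unfold tfin. rewrite tinit_shift_at. ring. Qed.

Lemma Cexp_twopii_indic (mu : C) (r : bool) :
  Cexp (twopii * mu * indic r) = if r then Cexp (twopii * mu) else 1%C.
Proof.
  destruct r; unfold indic.
  - f_equal. ring.
  - rewrite Cmult_0_r. apply Cexp_0.
Qed.

Lemma Cexp_twopii_indic_diff (N : nat) (r s : bool) :
  Cexp (twopii * (1 - RtoC (INR N)) * (indic r - indic s)) = 1%C.
Proof.
  transitivity (Cexp (twopii * IZR ((1 - Z.of_nat N) * (Z.b2z r - Z.b2z s))));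
    [|apply Cexp_twopii_int].
  f_equal. rewrite mult_IZR, !minus_IZR, <- INR_IZR_INZ.
  unfold indic. destruct r, s; simpl; apply C_ext; simpl; ring.
Qed.

Lemma oratio_E_N_jump (N : nat) (A1 A2 A3 A4 ex dex : C) (r1 s1 r2 s2 r3 s3 r4 s4 : bool) :
  (1 <= N)%nat ->
  qexp N A1 <> 1%C -> qexp N A2 <> 1%C -> qexp N A3 <> 1%C -> qexp N A4 <> 1%C ->
  exists v : C,
    oratio (E_N N A1) (E_N N A2) (E_N N A3) (E_N N A4) ex = Some v /\
    oratio (E_N N (A1 + (indic r1 - indic s1))) (E_N N (A2 + (indic r2 - indic s2)))
           (E_N N (A3 + (indic r3 - indic s3))) (E_N N (A4 + (indic r4 - indic s4)))
           (ex + dex) =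
    Some (v * (jump_factor (1 - qexp N A1) r1 s1 * jump_factor (1 - qexp N A2) r2 s2
               / (jump_factor (1 - qexp N A3) r3 s3 * jump_factor (1 - qexp N A4) r4 s4))
            * Cexp dex)%C.
Proof.
  intros HN Q1 Q2 Q3 Q4.
  destruct (E_N_jump N HN A1 r1 s1 Q1) as [e1 [_ [E1 E1']]].
  destruct (E_N_jump N HN A2 r2 s2 Q2) as [e2 [_ [E2 E2']]].
  destruct (E_N_jump N HN A3 r3 s3 Q3) as [e3 [N3 [E3 E3']]].
  destruct (E_N_jump N HN A4 r4 s4 Q4) as [e4 [N4 [E4 E4']]].
  pose proof (jump_factor_neq_0 _ r3 s3 (Cminus_1_neq_0 _ Q3)) as J3.
  pose proof (jump_factor_neq_0 _ r4 s4 (Cminus_1_neq_0 _ Q4)) as J4.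
  unfold oratio. rewrite E1, E2, E3, E4, E1', E2', E3', E4'.
  rewrite !Cnz_true by (auto using Cmult_neq_0).
  eexists; split; [reflexivity|].
  f_equal. rewrite Cexp_add. field. repeat split; auto.
Qed.

Definition crossing_jump (b : nat -> C) (m : C) (r1 r2 r1' r2' : bool) (c : crossing) : C :=
  ((if r1 then / a_in1 b m c else 1) * (if r2 then / a_in2 b m c else 1) *
   (if r1' then a_out1 b m c else 1) * (if r2' then a_out2 b m c else 1))%C.

Lemma jump_factors_plus (zn zs zw ze m : C) (r1 r2 r1' r2' : bool) :
  (1 - zn)%C <> 0%C -> (1 - zs)%C <> 0%C -> (1 - zw)%C <> 0%C -> (1 - ze)%C <> 0%C ->
  m <> 0%C ->
  (jump_factor (1 - zn) r2' r1 * jump_factor (1 - zs) r2 r1'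
     / (jump_factor (1 - zw) r2 r1 * jump_factor (1 - ze) r2' r1')
   * ((if r2 then m else 1) * (if r1' then m else 1)
      / ((if r1 then m else 1) * (if r2' then m else 1))))%C =
  ((if r1 then / (m * (1 - zw) / (1 - zn)) else 1) *
   (if r2 then / (/ m * (1 - zs) / (1 - zw)) else 1) *
   (if r1' then m * (1 - zs) / (1 - ze) else 1) *
   (if r2' then / m * (1 - ze) / (1 - zn) else 1))%C.
Proof.
  intros. destruct r1, r2, r1', r2'; unfold jump_factor; field; repeat split; auto.
Qed.

Lemma jump_factors_minus (zn zs zw ze m : C) (r1 r2 r1' r2' : bool) :
  (1 - zn)%C <> 0%C -> (1 - zs)%C <> 0%C -> (1 - zw)%C <> 0%C -> (1 - ze)%C <> 0%C ->
  m <> 0%C ->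
  (jump_factor (1 - zw) r1 r2 * jump_factor (1 - ze) r1' r2'
     / (jump_factor (1 - zn) r1 r2' * jump_factor (1 - zs) r1' r2)
   * ((if r1 then m else 1) * (if r2' then m else 1)
      / ((if r2 then m else 1) * (if r1' then m else 1))))%C =
  ((if r1 then / (/ m * (1 - zw) / (1 - zn)) else 1) *
   (if r2 then / (m * (1 - zs) / (1 - zw)) else 1) *
   (if r1' then / m * (1 - zs) / (1 - ze) else 1) *
   (if r2' then m * (1 - ze) / (1 - zn) else 1))%C.
Proof.
  intros. destruct r1, r2, r1', r2'; unfold jump_factor; field; repeat split; auto.
Qed.

Section Crossing_weight.

Variables (N : nat) (mu m : C) (b : nat -> C) (c : crossing) (T1 T2 T1' T2' : C).
Hypotheses (HN : (1 <= N)%nat) (Hm : m = Cexp (twopii * mu)).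
Hypotheses (Q1 : qexp N T1 = bval b (in1 c)) (Q2 : qexp N T2 = bval b (in2 c))
  (Q1' : qexp N T1' = bval b (out1 c)) (Q2' : qexp N T2' = bval b (out2 c)).
Hypothesis Hb : forall s, In s [in1 c; in2 c; out1 c; out2 c] -> bval b s <> 0%C.
Hypothesis Hz : forall z, In z [zN b c; zS b c; zW b m c; zE b m c] -> z <> 1%C.

Let m_neq_0 : m <> 0%C.
Proof. rewrite Hm. apply Cexp_neq_0. Qed.

Let qexp_mu : qexp N (mu / RtoC (INR N)) = m.
Proof. rewrite qexp_div_N by auto. auto. Qed.

Lemma Lambda_plus_jump (r1 r2 r1' r2' : bool) : Defs.positive c = true ->
  exists v : C, Lambda_plus N mu T1 T2 T1' T2' = Some v /\
    Lambda_plus N mu (T1 + indic r1) (T2 + indic r2) (T1' + indic r1') (T2' + indic r2')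
    = Some (v * crossing_jump b m r1 r2 r1' r2' c)%C.
Proof.
  intro Hpos. set (n := RtoC (INR N)).
  assert (B1 := Hb (in1 c) ltac:(simpl; auto)).
  assert (B1' := Hb (out1 c) ltac:(simpl; auto)).
  assert (A1 : qexp N (T2' - T1) = zN b c)
    by (rewrite qexp_sub, Q2', Q1; unfold zN; rewrite Hpos; reflexivity).
  assert (A2 : qexp N (T2 - T1') = zS b c)
    by (rewrite qexp_sub, Q2, Q1'; unfold zS; rewrite Hpos; reflexivity).
  assert (A3 : qexp N (T2 - T1 - mu / n + 1 - 1 / n) = zW b m c)
    by (unfold n; rewrite !qexp_sub, !qexp_add, !qexp_sub, Q2, Q1, qexp_mu, qexp_1, qexp_inv_N
          by auto; unfold zW; rewrite Hpos; cbn [epow]; field; auto).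
  assert (A4 : qexp N (T2' - T1' + mu / n) = zE b m c)
    by (unfold n; rewrite qexp_add, qexp_sub, qexp_mu, Q2', Q1' by auto;
        unfold zE; rewrite Hpos; cbn [epow]; field; auto).
  destruct (oratio_E_N_jump N (T2' - T1) (T2 - T1') (T2 - T1 - mu / n + 1 - 1 / n)
    (T2' - T1' + mu / n)
    (twopii * (1 - n) * (T2 - T1 - mu / n) + twopii * mu * (T2 + T1' - T1 - T2'))
    (twopii * (1 - n) * (indic r2 - indic r1)
     + ((twopii * mu * indic r2 + twopii * mu * indic r1')
        - (twopii * mu * indic r1 + twopii * mu * indic r2')))
    r2' r1 r2 r1' r2 r1 r2' r1' HN)
    as [v [E0 E1]]; try (rewrite ?A1, ?A2, ?A3, ?A4; apply Hz; simpl; tauto).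
  exists v. split; [exact E0|].
  unfold Lambda_plus. fold n.
  erewrite f_equal5 with (f := oratio); [rewrite E1; f_equal | try (f_equal; ring); ring ..].
  unfold n in *.
  rewrite A1, A2, A3, A4, Cexp_add, Cexp_sub, !Cexp_add, Cexp_twopii_indic_diff,
    !Cexp_twopii_indic, <- Hm, Cmult_1_l, <- Cmult_assoc, jump_factors_plus
    by first [exact m_neq_0 | apply Cminus_1_neq_0, Hz; simpl; tauto].
  unfold crossing_jump, a_in1, a_in2, a_out1, a_out2. rewrite Hpos. reflexivity.
Qed.

Lemma Lambda_minus_jump (r1 r2 r1' r2' : bool) : Defs.positive c = false ->
  exists v : C, Lambda_minus N mu T1 T2 T1' T2' = Some v /\
    Lambda_minus N mu (T1 + indic r1) (T2 + indic r2) (T1' + indic r1') (T2' + indic r2')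
    = Some (v * crossing_jump b m r1 r2 r1' r2' c)%C.
Proof.
  intro Hpos. set (n := RtoC (INR N)).
  assert (B1 := Hb (in1 c) ltac:(simpl; auto)).
  assert (B2 := Hb (in2 c) ltac:(simpl; auto)).
  assert (B1' := Hb (out1 c) ltac:(simpl; auto)).
  assert (B2' := Hb (out2 c) ltac:(simpl; auto)).
  assert (A1 : qexp N (T1 - T2 + mu / n) = zW b m c)
    by (unfold n; rewrite qexp_add, qexp_sub, qexp_mu, Q2, Q1 by auto;
        unfold zW; rewrite Hpos; cbn [epow]; field; auto).
  assert (A2 : qexp N (T1' - T2' - mu / n + 1 - 1 / n) = zE b m c)
    by (unfold n; rewrite !qexp_sub, !qexp_add, !qexp_sub, Q2', Q1', qexp_mu, qexp_1,
          qexp_inv_N by auto; unfold zE; rewrite Hpos; cbn [epow]; field; auto).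
  assert (A3 : qexp N (T1 - T2' + 1 - 1 / n) = zN b c)
    by (unfold n; rewrite !qexp_sub, !qexp_add, !qexp_sub, Q2', Q1, qexp_1, qexp_inv_N
          by auto; unfold zN; rewrite Hpos; cbn [epow]; field; auto).
  assert (A4 : qexp N (T1' - T2 + 1 - 1 / n) = zS b c)
    by (unfold n; rewrite !qexp_sub, !qexp_add, !qexp_sub, Q2, Q1', qexp_1, qexp_inv_N
          by auto; unfold zS; rewrite Hpos; cbn [epow]; field; auto).
  destruct (oratio_E_N_jump N (T1 - T2 + mu / n) (T1' - T2' - mu / n + 1 - 1 / n)
    (T1 - T2' + 1 - 1 / n) (T1' - T2 + 1 - 1 / n)
    (- (twopii * (1 - n) * (T2 - T1 - mu / n)) - twopii * mu * (T2 + T1' - T1 - T2'))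
    (twopii * (1 - n) * (indic r1 - indic r2)
     + ((twopii * mu * indic r1 + twopii * mu * indic r2')
        - (twopii * mu * indic r2 + twopii * mu * indic r1')))
    r1 r2 r1' r2' r1 r2' r1' r2 HN)
    as [v [E0 E1]]; try (rewrite ?A1, ?A2, ?A3, ?A4; apply Hz; simpl; tauto).
  exists v. split; [exact E0|].
  unfold Lambda_minus. fold n.
  erewrite f_equal5 with (f := oratio); [rewrite E1; f_equal | try (f_equal; ring); ring ..].
  unfold n in *.
  rewrite A1, A2, A3, A4, Cexp_add, Cexp_sub, !Cexp_add, Cexp_twopii_indic_diff,
    !Cexp_twopii_indic, <- Hm, Cmult_1_l, <- Cmult_assoc, jump_factors_minus
    by first [exact m_neq_0 | apply Cminus_1_neq_0, Hz; simpl; tauto].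
  unfold crossing_jump, a_in1, a_in2, a_out1, a_out2. rewrite Hpos. reflexivity.
Qed.

End Crossing_weight.

Lemma bval_neq_0 (D : diagram) (b : nat -> C) (s : seg) :
  (forall i, (i < nE D)%nat -> b i <> 0%C) -> valid_seg D s -> bval b s <> 0%C.
Proof. destruct s; simpl; auto using C1_nz. Qed.

Lemma fold_omul_scale {A : Type} (l : list A) (L L' : A -> option C) (G : A -> C) :
  (forall a, In a l -> exists v : C, L a = Some v /\ L' a = Some (v * G a)%C) ->
  exists P : C, fold_right (fun a acc => omul (L a) acc) (Some (RtoC 1)) l = Some P /\
    fold_right (fun a acc => omul (L' a) acc) (Some (RtoC 1)) l
    = Some (P * Cprod (map G l))%C.
Proof.
  induction l as [|a l IH]; intro H.
  - exists 1%C. simpl. split; [reflexivity | f_equal; ring].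
  - destruct IH as [P [HP HP']]; [intros; apply H; simpl; auto|].
    destruct (H a (or_introl eq_refl)) as [v [Hv Hv']].
    exists (v * P)%C. simpl. rewrite HP, HP', Hv, Hv'. simpl.
    split; [reflexivity | f_equal; ring].
Qed.

Section Lattice_weight.

Variables (D : diagram) (N : nat) (mu : C) (b beta : nat -> C) (n : nat -> Z).
Hypotheses (HN : (1 <= N)%nat)
  (Hval : forall c, In c (crossings D) ->
     valid_seg D (in1 c) /\ valid_seg D (in2 c) /\ valid_seg D (out1 c) /\ valid_seg D (out2 c))
  (Hb0 : forall i, (i < nE D)%nat -> b i <> 0%C)
  (Hbeta : forall i, (i < nE D)%nat -> Cexp (twopii * beta i)%C = b i)
  (Hnd : shapes_nondegenerate D b (Cexp (twopii * mu))).

Lemma Lambda_lattice_jump (i : nat) (c : crossing) : In c (crossings D) ->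
  exists v : C, Lambda D N mu (lattice_point N beta n) c = Some v /\
    Lambda D N mu (shift_at i (lattice_point N beta n)) c =
    Some (v * crossing_jump b (Cexp (twopii * mu))
                (seg_eqb (in1 c) (SInt i)) (seg_eqb (in2 c) (SInt i))
                (seg_eqb (out1 c) (SInt i)) (seg_eqb (out2 c) (SInt i)) c)%C.
Proof.
  intro Hc. destruct (Hval c Hc) as [V1 [V2 [V1' V2']]].
  assert (Hb : forall s, In s [in1 c; in2 c; out1 c; out2 c] -> bval b s <> 0%C)
    by (intros s Hs; apply (bval_neq_0 D); auto; simpl in Hs; intuition congruence).
  assert (Hz : forall z, In z [zN b c; zS b c; zW b (Cexp (twopii * mu)) c;
                               zE b (Cexp (twopii * mu)) c] -> z <> 1%C)
    by (intros z Hz; apply (Hnd c Hc z Hz)).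
  unfold Lambda. rewrite !tfin_shift_at, !tinit_shift_at.
  destruct (Defs.positive c) eqn:Hpos.
  - apply Lambda_plus_jump; auto; apply (qexp_tfin N HN D b beta n Hbeta) ||
      apply (qexp_tinit N HN D b beta n Hbeta); auto.
  - apply Lambda_minus_jump; auto; apply (qexp_tfin N HN D b beta n Hbeta) ||
      apply (qexp_tinit N HN D b beta n Hbeta); auto.
Qed.

Lemma W_lattice_jump (i : nat) :
  exists w : C, W D N mu (lattice_point N beta n) = Some w /\
    W D N mu (shift_at i (lattice_point N beta n)) =
    Some (w * Cprod (map (fun c => crossing_jump b (Cexp (twopii * mu))
                (seg_eqb (in1 c) (SInt i)) (seg_eqb (in2 c) (SInt i))
                (seg_eqb (out1 c) (SInt i)) (seg_eqb (out2 c) (SInt i)) c)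
              (crossings D)))%C.
Proof. apply fold_omul_scale. apply Lambda_lattice_jump. Qed.

End Lattice_weight.

Definition end_factor (e1 e2 : crossing -> seg) (g1 g2 : crossing -> C) (s : seg)
    (c : crossing) : C :=
  ((if seg_eqb (e1 c) s then g1 c else 1) * (if seg_eqb (e2 c) s then g2 c else 1))%C.

Definition end_count (e1 e2 : crossing -> seg) (s : seg) (l : list crossing) : nat :=
  fold_right (fun c acc =>
    ((if seg_eqb (e1 c) s then 1 else 0) + (if seg_eqb (e2 c) s then 1 else 0) + acc)%nat)
    0%nat l.

Lemma seg_eqb_eq (s s' : seg) : seg_eqb s s' = true -> s = s'.
Proof.
  destruct s, s'; simpl; try discriminate; auto.
  intro H. apply Nat.eqb_eq in H. subst. reflexivity.
Qed.

Section End_factors.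

Variables (e1 e2 : crossing -> seg) (g1 g2 : crossing -> C) (s : seg).

Lemma prod_end_factor_count_0 (l : list crossing) :
  end_count e1 e2 s l = 0%nat -> Cprod (map (end_factor e1 e2 g1 g2 s) l) = 1%C.
Proof.
  induction l as [|c l IH]; simpl; auto.
  unfold end_factor at 1.
  destruct (seg_eqb (e1 c) s), (seg_eqb (e2 c) s); simpl; try lia.
  intro H. rewrite IH by auto. ring.
Qed.

Lemma prod_end_factor_count_1 (l : list crossing) :
  end_count e1 e2 s l = 1%nat ->
  exists c, In c l /\
    ((e1 c = s /\ Cprod (map (end_factor e1 e2 g1 g2 s) l) = g1 c) \/
     (e2 c = s /\ Cprod (map (end_factor e1 e2 g1 g2 s) l) = g2 c)).
Proof.
  induction l as [|c l IH]; simpl; [lia|].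
  change (end_factor e1 e2 g1 g2 s c) with
    ((if seg_eqb (e1 c) s then g1 c else 1) * (if seg_eqb (e2 c) s then g2 c else 1))%C.
  destruct (seg_eqb (e1 c) s) eqn:E1, (seg_eqb (e2 c) s) eqn:E2; simpl; intro H; try lia.
  - exists c. split; auto. left. split; [apply seg_eqb_eq; auto|].
    rewrite prod_end_factor_count_0 by lia. ring.
  - exists c. split; auto. right. split; [apply seg_eqb_eq; auto|].
    rewrite prod_end_factor_count_0 by lia. ring.
  - destruct (IH H) as [c' [Hc' Hcases]]. exists c'. split; auto.
    destruct Hcases as [[A B]|[A B]]; [left | right]; split; auto; rewrite B; ring.
Qed.

End End_factors.

Lemma a_out_neq_0 (b : nat -> C) (m : C) (c : crossing) : m <> 0%C ->
  (forall z, In z [zN b c; zS b c; zW b m c; zE b m c] -> z <> RtoC 0 /\ z <> RtoC 1) ->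
  a_out1 b m c <> 0%C /\ a_out2 b m c <> 0%C.
Proof.
  intros Hm Hnd.
  assert (Hz : forall z, In z [zN b c; zS b c; zW b m c; zE b m c] -> (1 - z)%C <> 0%C)
    by (intros z Hz; apply Cminus_1_neq_0, Hnd, Hz).
  assert (He : forall e, epow e m <> 0%C) by (intros []; simpl; auto using Cinv_neq_0).
  unfold a_out1, a_out2, Cdiv.
  split; repeat apply Cmult_neq_0; auto;
    (apply Cinv_neq_0, Hz || apply Hz); simpl; tauto.
Qed.

Lemma prod_crossing_jump_segment (D : diagram) (b : nat -> C) (m : C) (i : nat) :
  m <> 0%C -> count_in D (SInt i) = 1%nat -> count_out D (SInt i) = 1%nat ->
  segment_equations D b m -> shapes_nondegenerate D b m ->
  Cprod (map (fun c => crossing_jump b m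
                (seg_eqb (in1 c) (SInt i)) (seg_eqb (in2 c) (SInt i))
                (seg_eqb (out1 c) (SInt i)) (seg_eqb (out2 c) (SInt i)) c)
             (crossings D)) = 1%C.
Proof.
  intros Hm Cin Cout Hseg Hnd.
  rewrite (map_ext _ (fun c =>
      end_factor in1 in2 (fun c => / a_in1 b m c) (fun c => / a_in2 b m c) (SInt i) c
      * end_factor out1 out2 (a_out1 b m) (a_out2 b m) (SInt i) c)%C)
    by (intro c; unfold crossing_jump, end_factor; ring).
  rewrite Cprod_map_mult.
  destruct (prod_end_factor_count_1 in1 in2 (fun c => / a_in1 b m c)%C
              (fun c => / a_in2 b m c)%C (SInt i) (crossings D) Cin) as [c0 [Hc0 Hin]].
  destruct (prod_end_factor_count_1 out1 out2 (a_out1 b m) (a_out2 b m) (SInt i)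
              (crossings D) Cout) as [c1 [Hc1 Hout]].
  destruct (a_out_neq_0 b m c1 Hm (Hnd c1 Hc1)) as [Ha1 Ha2].
  destruct (Hseg c0 c1 Hc0 Hc1) as [S11 [S12 [S21 S22]]].
  destruct Hout as [[Eo Ho]|[Eo Ho]]; rewrite Ho;
    destruct Hin as [[Ei Hi]|[Ei Hi]]; rewrite Hi.
  - rewrite S11 by (rewrite Ei, Eo; reflexivity). field; auto.
  - rewrite S21 by (rewrite Ei, Eo; reflexivity). field; auto.
  - rewrite S12 by (rewrite Ei, Eo; reflexivity). field; auto.
  - rewrite S22 by (rewrite Ei, Eo; reflexivity). field; auto.
Qed.

Theorem mainTheorem2 (D : diagram) (N : nat) (mu : C) (b beta : nat -> C) :
  wf_diagram D ->
  (2 <= N)%nat ->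
  segment_equations D b (Cexp (twopii * mu)%C) ->
  (forall i, (i < nE D)%nat -> b i <> RtoC 0) ->
  shapes_nondegenerate D b (Cexp (twopii * mu)%C) ->
  (forall i, (i < nE D)%nat -> Cexp (twopii * beta i)%C = b i) ->
  forall n : nat -> Z,
    let pt := fun j => ((beta j + RtoC (IZR (n j))) / RtoC (INR N))%C in
    (exists v, W D N mu pt = Some v) /\
    (forall i, (i < nE D)%nat ->
       W D N mu (fun j => if Nat.eqb j i then (pt j + RtoC 1)%C else pt j)
       = W D N mu pt).
Proof.
  intros [Hval [_ [_ [_ [_ [Hcount _]]]]]] HN Hseg Hb0 Hnd Hbeta n pt.
  change pt with (lattice_point N beta n).
  assert (HN1 : (1 <= N)%nat) by lia.
  split.
  - destruct (W_lattice_jump D N mu b beta n HN1 Hval Hb0 Hbeta Hnd 0)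
      as [w [Hw _]].
    exists w. exact Hw.
  - intros i Hi. change (W D N mu (shift_at i (lattice_point N beta n)) =
                         W D N mu (lattice_point N beta n)).
    destruct (W_lattice_jump D N mu b beta n HN1 Hval Hb0 Hbeta Hnd i)
      as [w [Hw Hw']].
    destruct (Hcount i Hi) as [Cin Cout].
    rewrite Hw', Hw, prod_crossing_jump_segment, Cmult_1_r; auto using Cexp_neq_0.
Qed.
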